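(* Let $\mathbb{F}=\mathbb{F}_p$, $r_1,\dots,r_n\in\mathbb{F}^N$ and $k\in[N]$. Then $$\mathcal{S}^{\{k\}}(r_1,\dots,r_n)=\sum_{\tau\subseteq[n]}(-1)^{|\tau|}\,|\tau|!\; r_\tau(k)\;\mathcal{S}\big(r[[n]\setminus\tau]\big).$$
   Context: For vectors $w_1,\dots,w_L\in\mathbb{F}^N$ and $T\subseteq[N]$, $\mathcal{S}^T(w_1,\dots,w_L)=\sum_\rho\prod_{i=1}^Lw_i(\rho(i))$ over injective maps $\rho:[L]\to[N]\setminus T$ (sum of permanents of all $L\times L$ submatrices avoiding columns in $T$), and $\mathcal{S}=\mathcal{S}^{\emptyset}$. For $\tau\subseteq[n]$, $r_\tau$ is the coordinatewise product $\prod_{i\in\tau}r_i$, with $r_\emptyset$ the all-ones vector; $r[\sigma]$ denotes the list of vectors $r_i$, $i\in\sigma$, and $\mathcal{S}(r[\emptyset])=1$. $r(j)$ is the $j$-th coordinate. *)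

From mathcomp Require Import all_boot all_order all_algebra.
Set Implicit Arguments. Unset Strict Implicit. Unset Printing Implicit Defensive.
Import GRing.Theory.
Local Open Scope ring_scope.

(* S^T(w_1,...,w_L): sum over injective rho : [L] -> [N] \ T of prod_i w_i(rho i).
   Vectors in F^N are functions 'I_N -> F; the list w_1..w_L is w : 'I_L -> 'I_N -> F. *)
Definition Ssum (R : comNzRingType) (N L : nat) (T : {set 'I_N})
    (w : 'I_L -> 'I_N -> R) : R :=
  \sum_(rho : {ffun 'I_L -> 'I_N} | injectiveb rho && [forall i, rho i \notin T])
     \prod_(i < L) w i (rho i).

Definition rprod (R : comNzRingType) (N n : nat) (r : 'I_n -> 'I_N -> R)
    (tau : {set 'I_n}) : 'I_N -> R :=
  fun j => \prod_(i in tau) r i j.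

(* r[sigma]: the list of the r_i, i in sigma, in increasing order of i. *)
Definition rsub (R : comNzRingType) (N n : nat) (r : 'I_n -> 'I_N -> R)
    (sigma : {set 'I_n}) : 'I_#|sigma| -> 'I_N -> R :=
  fun i => r (enum_val i).
Arguments rsub {R N n} r sigma _ _.
Arguments rprod {R N n} r tau _.

(* An injection on s either avoids k or sends exactly one index i in s to k, whence
   S(r[s]) = S^{k}(r[s]) + sum_{i in s} r_i(k) S^{k}(r[s \ i]).  Substituting this into the
   right-hand side and regrouping the second part by tau u {i}, every nonempty tau collects
   the coefficient (-1)^|tau| |tau|! + |tau| (-1)^(|tau|-1) (|tau|-1)! = 0, so only the
   term tau = {} survives, which is S^{k}(r). *)

From mathcomp Require Import all_boot all_order all_algebra.
Import GRing.Theory.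
Local Open Scope ring_scope.
Set Implicit Arguments. Unset Strict Implicit.

Lemma enum_val_onto (T : finType) (A : {pred T}) x :
  x \in A -> exists j : 'I_#|A|, x = enum_val j.
Proof. by move=> Ax; exists (enum_rank_in Ax x); rewrite enum_rankK_in. Qed.

Lemma dinjectiveb_setD1 (T : finType) (U : eqType) (f : T -> U) (s : {set T}) i :
  i \in s -> dinjectiveb f s = dinjectiveb f (s :\ i) && [forall j in s :\ i, f j != f i].
Proof.
move=> si; apply/dinjectiveP/andP => [inj | [/dinjectiveP inj /forallP ne]].
  split; first by apply/dinjectiveP => a b /setD1P[_ sa] /setD1P[_ sb]; apply: inj.
  by apply/forallP => j; apply/implyP => /setD1P[ji sj]; apply: contra_neq ji; apply: inj.
have neP a : a \in s -> a != i -> f a != f i by move=> sa ai; have := ne a; rewrite !inE ai sa.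
move=> a b sa sb fab; case: (eqVneq a i) => [ai | ai]; case: (eqVneq b i) => [bi | bi].
- by rewrite ai bi.
- by have := neP b sb bi; rewrite -fab ai eqxx.
- by have := neP a sa ai; rewrite fab bi eqxx.
- by apply: inj; rewrite // !inE ?ai ?bi.
Qed.

Lemma sum_set_extensions (T : finType) (V : nmodType) (F : {set T} -> T -> V) :
  \sum_(A : {set T}) \sum_(i in ~: A) F A i = \sum_(B : {set T}) \sum_(i in B) F (B :\ i) i.
Proof.
rewrite (exchange_big_dep predT) // [RHS](exchange_big_dep predT) //=.
apply: eq_bigr => i _.
rewrite (reindex_onto (fun B => B :\ i) (fun A => i |: A)) /=; last first.
  by move=> A; rewrite inE => /setU1K.
apply: eq_bigl => B; rewrite !inE eqxx /=.
by apply/eqP/idP => [<- | iB]; [rewrite !inE eqxx | rewrite setD1K].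
Qed.

Section Expansion.
Variables (R : comNzRingType) (N n : nat) (r : 'I_n -> 'I_N -> R) (k : 'I_N).

(* S^T(r[s]) is indexed by maps on all of 'I_n that are injective on s and equal to k
   off s; fixing the values off s makes these correspond to maps on 'I_#|s|. *)
Definition sub_inj (T : {set 'I_N}) (s : {set 'I_n}) (rho : {ffun 'I_n -> 'I_N}) : bool :=
  [&& [forall i, (i \notin s) ==> (rho i == k)], dinjectiveb rho s
    & [forall i in s, rho i \notin T]].

Definition Ssub (T : {set 'I_N}) (s : {set 'I_n}) : R :=
  \sum_(rho | sub_inj T s rho) \prod_(i in s) r i (rho i).

Lemma Ssum_setT T : Ssum T r = Ssub T setT.
Proof.
rewrite /Ssum /Ssub; apply: eq_big => [rho | rho _]; last by apply: eq_bigl => i; rewrite inE.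
rewrite /sub_inj.
have -> : dinjectiveb rho setT = injectiveb rho by apply: eq_dinjectiveb => // i; rewrite inE.
have -> : [forall i in setT, rho i \notin T] = [forall i, rho i \notin T].
  by apply: eq_forallb => i; rewrite inE.
have -> // : [forall i, (i \notin setT) ==> (rho i == k)].
by apply/forallP => i; rewrite inE.
Qed.

Definition extend_by_k (s : {set 'I_n}) (f : {ffun 'I_#|s| -> 'I_N}) : {ffun 'I_n -> 'I_N} :=
  [ffun i => if [pick j | enum_val j == i] is Some j then f j else k].

Lemma extend_by_k_val (s : {set 'I_n}) (f : {ffun 'I_#|s| -> 'I_N}) j :
  extend_by_k f (enum_val j) = f j.
Proof.
by rewrite ffunE; case: pickP => [j' /eqP /enum_val_inj -> | /(_ j)]; rewrite ?eqxx.
Qed.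

Lemma extend_by_k_out (s : {set 'I_n}) (f : {ffun 'I_#|s| -> 'I_N}) i :
  i \notin s -> extend_by_k f i = k.
Proof.
move=> si; rewrite ffunE; case: pickP => // j /eqP ji.
by move: si; rewrite -ji enum_valP.
Qed.

Lemma sub_inj_extend_by_k T (s : {set 'I_n}) (f : {ffun 'I_#|s| -> 'I_N}) :
  sub_inj T s (extend_by_k f) = injectiveb f && [forall j, f j \notin T].
Proof.
apply/and3P/andP => [[_ /dinjectiveP inj /forallP av] | [/injectiveP inj /forallP av]].
  split; last by apply/forallP => j; have := av (enum_val j); rewrite enum_valP extend_by_k_val.
  apply/injectiveP => i j fij; apply: enum_val_inj; apply: inj; rewrite ?enum_valP //.
  by rewrite !extend_by_k_val.
split.
- by apply/forallP => i; apply/implyP => /extend_by_k_out ->.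
- apply/dinjectiveP => a b /enum_val_onto[i ->] /enum_val_onto[j ->].
  by rewrite !extend_by_k_val => /inj ->.
- by apply/forallP => a; apply/implyP => /enum_val_onto[i ->]; rewrite extend_by_k_val.
Qed.

Lemma Ssum_rsub T s : Ssum T (rsub r s) = Ssub T s.
Proof.
rewrite /Ssub (reindex (@extend_by_k s)) /=; last first.
  exists (fun rho => [ffun j => rho (enum_val j)]) => [f _ | rho].
    by apply/ffunP => j; rewrite ffunE extend_by_k_val.
  rewrite inE => /and3P[/forallP off _ _]; apply/ffunP => i.
  have [/enum_val_onto[j ->] | si] := boolP (i \in s); first by rewrite extend_by_k_val ffunE.
  by rewrite extend_by_k_out //; apply/esym/eqP; apply: (implyP (off i)).
rewrite /Ssum; apply: eq_big => [f | f _]; first by rewrite sub_inj_extend_by_k.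
by rewrite [RHS]big_enum_val; apply: eq_bigr => j _; rewrite extend_by_k_val.
Qed.

Lemma sub_inj_set1 (s : {set 'I_n}) rho :
  sub_inj [set k] s rho = sub_inj set0 s rho && [forall i in s, rho i != k].
Proof.
rewrite /sub_inj.
have -> : [forall i in s, rho i \notin [set k]] = [forall i in s, rho i != k].
  by apply: eq_forallb => i; rewrite inE.
have -> : [forall i in s, rho i \notin set0] by apply/forallP => i; rewrite inE implybT.
by rewrite andbT -!andbA.
Qed.

Lemma sub_inj_setD1 (s : {set 'I_n}) i rho : i \in s ->
  sub_inj [set k] (s :\ i) rho = sub_inj set0 s rho && (rho i == k).
Proof.
move=> si; rewrite /sub_inj (dinjectiveb_setD1 _ si).
apply/and3P/andP => [[/forallP off inj /forallP av] |
                     [/and3P[/forallP off /andP[inj /forallP ne] _] /eqP rik]].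
  have rik : rho i == k by have := off i; rewrite !inE eqxx.
  split=> //; apply/and3P; split.
  - by apply/forallP => j; apply/implyP => sj; have := off j; rewrite !inE (negbTE sj) andbF.
  - rewrite inj; apply/forallP => j; apply/implyP => sj.
    by have := av j; rewrite sj inE (eqP rik).
  - by apply/forallP => j; rewrite inE implybT.
split=> //.
- apply/forallP => j; apply/implyP; rewrite !inE negb_and negbK => /orP[/eqP -> | sj].
    by rewrite rik.
  exact: (implyP (off j)).
- by apply/forallP => j; apply/implyP => sj; rewrite inE -rik; apply: (implyP (ne j)).
Qed.

Lemma sum_fibre_k (s : {set 'I_n}) rho (x : R) : sub_inj set0 s rho ->
  x = (if [forall i in s, rho i != k] then x else 0) + \sum_(i in s | rho i == k) x.
Proof.
case/and3P => _ /dinjectiveP inj _; case: ifPn => [/forallP nk | ].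
  by rewrite big1 ?addr0 // => i /andP[si rik]; have := nk i; rewrite si rik.
rewrite negb_forall => /existsP[i0]; rewrite negb_imply negbK => /andP[si0 ri0k].
rewrite add0r (bigD1 i0) /=; last by rewrite si0.
rewrite big1 ?addr0 // => j /andP[/andP[sj rjk] ji0].
by case/eqP: ji0; apply: inj; rewrite // (eqP rjk) (eqP ri0k).
Qed.

Lemma Ssub_set0 (s : {set 'I_n}) :
  Ssub set0 s = Ssub [set k] s + \sum_(i in s) r i k * Ssub [set k] (s :\ i).
Proof.
rewrite /Ssub (eq_bigr _ (fun rho => sum_fibre_k _)) big_split /=; congr (_ + _).
  by rewrite -big_mkcondr; apply: eq_bigl => rho; rewrite sub_inj_set1.
rewrite (exchange_big_dep (mem s)) /=; last by move=> rho i _ /andP[].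
apply: eq_bigr => i si; rewrite big_distrr /=.
apply: eq_big => [rho | rho /andP[_ /andP[_ rik]]]; first by rewrite sub_inj_setD1 // si.
by rewrite (big_setD1 _ si) (eqP rik).
Qed.

Definition sign_fact (m : nat) : R := (-1) ^+ m * (m`!)%:R.

Lemma sign_factS m : sign_fact m.+1 = - (m.+1%:R * sign_fact m).
Proof. by rewrite /sign_fact factS natrM exprS mulN1r mulNr mulrCA. Qed.

Lemma expansion_term_setD1 (B : {set 'I_n}) i : i \in B ->
  sign_fact #|B :\ i| * rprod r (B :\ i) k * (r i k * Ssub [set k] (~: (B :\ i) :\ i))
  = sign_fact #|B|.-1 * rprod r B k * Ssub [set k] (~: B).
Proof.
move=> iB; have -> : ~: (B :\ i) :\ i = ~: B.
  by apply/setP => x; rewrite !inE; case: eqVneq => [-> | ] //=; rewrite iB.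
by rewrite [in RHS](cardsD1 i) iB /rprod (big_setD1 _ iB) /= !mulrA [_ * r i k]mulrAC.
Qed.

Lemma Ssub_expansion : Ssub [set k] setT =
  \sum_(tau : {set 'I_n}) sign_fact #|tau| * rprod r tau k * Ssub set0 (~: tau).
Proof.
under eq_bigr do rewrite Ssub_set0 mulrDr [X in _ + X]big_distrr /=.
rewrite big_split /= sum_set_extensions -big_split /= (bigD1 set0) //= [X in _ + X]big1.
  by rewrite big_set0 !addr0 cards0 /sign_fact /rprod big_set0 setC0 expr0 mulr1 !mul1r.
move=> B B0.
rewrite (eq_bigr _ (fun i => expansion_term_setD1 (i := i))) sumr_const -mulr_natl.
have [m -> /=] : exists m, #|B| = m.+1 by exists #|B|.-1; rewrite prednK // card_gt0.
by rewrite sign_factS !mulNr !mulrA addNr.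
Qed.

End Expansion.

Theorem lemma2p5 (p : nat) (hp : prime p) (N n : nat)
    (r : 'I_n -> 'I_N -> 'F_p) (k : 'I_N) :
  Ssum [set k] r =
  \sum_(tau : {set 'I_n})
     (-1) ^+ #|tau| * (#|tau|`!)%:R * rprod r tau k
       * Ssum set0 (rsub r (~: tau)).
Proof.
rewrite (Ssum_setT _ k) Ssub_expansion; apply: eq_bigr => tau _.
by rewrite (Ssum_rsub _ k).
Qed.
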